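(* Suppose a first-order method in Algorithm Class 1 is applied to instance $\mathcal P$ from $x^{(0)}=0$ and generates a sequence $\{x^{(t)}\}_{t\ge0}$, with $x^{(t)}=(x_1^{(t)\top},\dots,x_m^{(t)\top})^\top$, $x_i^{(t)}\in\mathbb R^{\bar d}$. Then for any $\bar j\in\{2,3,\dots,\bar d\}$, $\mathrm{supp}(x_i^{(t)})\subset\{1,\dots,\bar j-1\}$ for all $i=1,\dots,m$ and all integers $0\le t\le 1+m(\bar j-2)/6$.
   Context: $\mathrm{supp}(z)=\{j:[z]_j\ne0\}$. Algorithm Class 1 (for problem $\min f_0(x)+g(x)$ s.t. $Ax+b=0$): given $x^{(0)}$, for every $t\ge1$, $x^{(t)}\in\mathrm{span}\{\xi^{(t)},\mathrm{prox}_{\eta_tg}(\xi^{(t)})\}$ for some $\eta_t>0$ and some $\xi^{(t)}\in\mathrm{span}\{x^{(s)},\nabla f_0(x^{(s)}),A^\top b,A^\top Ax^{(s)}\}_{s=0}^{t-1}$, where $\mathrm{prox}_{\eta g}(x)=\arg\min_{x'}\{g(x')+\frac1{2\eta}\|x'-x\|^2\}$. Instance $\mathcal P$: fix $\epsilon\in(0,1)$, $L_f>0$, integers $m_1\ge2$, $m_2\ge1$ with $m_1m_2$ even, $m=3m_1m_2$, an odd integer $\bar d\ge5$, $d=m\bar d$. Write $x=(x_1^\top,\dots,x_m^\top)^\top$, $x_i\in\mathbb R^{\bar d}$; $[z]_j$ is the $j$-th coordinate. $J_p\in\mathbb R^{(p-1)\times p}$ has $-1$ at $(k,k)$, $1$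 at $(k,k+1)$, zero elsewhere. $\mathcal M=\{im_1:i=1,\dots,3m_2-1\}$, $\mathcal M^C=\{1,\dots,m-1\}\setminus\mathcal M$, $\bar A=mL_f(J_{\mathcal M}\otimes I_{\bar d})$, $A=mL_f(J_{\mathcal M^C}\otimes I_{\bar d})$ with $J_{\mathcal M},J_{\mathcal M^C}$ the rows of $J_m$ indexed by $\mathcal M,\mathcal M^C$; $b=0$. Choose $\beta>(50\pi+1+\|A\|)\sqrt m\,\epsilon$; $g(x)=\beta\sum_{i\in\mathcal M}\|x_i-x_{i+1}\|_1$. $\Psi(u)=0$ ($u\le0$), $1-e^{-u^2}$ ($u>0$); $\Phi(v)=4\arctan v+2\pi$. For $z\in\mathbb R^{\bar d}$: $\varphi(z,1)=-\Psi(1)\Phi([z]_1)$, $\varphi(z,j)=\Psi(-[z]_{j-1})\Phi(-[z]_j)-\Psi([z]_{j-1})\Phi([z]_j)$ ($2\le j\le\bar d$); $h_i(z)=\varphi(z,1)+3\sum_{j=1}^{\lfloor\bar d/2\rfloor}\varphi(z,2j)$ for $1\le i\le m/3$, $h_i(z)=\varphi(z,1)$ for $m/3+1\le i\le 2m/3$, $h_i(z)=\varphi(z,1)+3\sum_{j=1}^{\lfloor\bar d/2\rfloor}\varphi(z,2j+1)$ for $2m/3+1\le i\le m$. $f_i(z)=\frac{300\pi\epsilon^2}{mL_f}h_i(\frac{\sqrt mL_fz}{150\pi\epsilon})$, $f_0(x)=\sum_{i=1}^mf_i(x_i)$. Instance $\mathcal P$ is $\min_x f_0(x)+g(x)$ s.t.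 $Ax+b=0$. *)

From HB Require Import structures.
From mathcomp Require Import all_boot all_order all_algebra.
From mathcomp Require Import all_classical all_reals all_analysis.
Set Implicit Arguments. Unset Strict Implicit. Unset Printing Implicit Defensive.
Import Order.TTheory GRing.Theory Num.Theory.
Local Open Scope ring_scope.
Local Open Scope classical_set_scope.

Section Defs.
Variable R : realType.

Definition sqnorm n (v : 'cV[R]_n) : R := \sum_k (v k 0) ^+ 2.
Definition enorm n (v : 'cV[R]_n) : R := Num.sqrt (sqnorm v).

Definition opnorm p q (A : 'M[R]_(p, q)) : R :=
  sup [set enorm (A *m v) | v in [set v : 'cV[R]_q | enorm v <= 1]].

(* block structure: coordinates of x in R^(m*dbar) are indexed by pairs
   (i, j) : 'I_m * 'I_dbar, x = (x_1^T, ..., x_m^T)^T, via mxvec_index *)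
Definition unpair p r (k : 'I_(p * r)) : 'I_p * 'I_r :=
  enum_val (cast_ord (esym (mxvec_cast p r)) k).
Definition blk m dbar (x : 'cV[R]_(m * dbar)) (i : 'I_m) : 'cV[R]_dbar :=
  \col_j x (mxvec_index i j) 0.

Definition kron p q r s (A : 'M[R]_(p, q)) (B : 'M[R]_(r, s)) : 'M[R]_(p * r, q * s) :=
  \matrix_(k, l) (A (unpair k).1 (unpair l).1 * B (unpair k).2 (unpair l).2).

(* support, with 1-based coordinate indices *)
Definition supp n (z : 'cV[R]_n) : set nat :=
  [set k | exists j : 'I_n, k = (val j).+1 /\ z j 0 != 0].

(* 1-based coordinate access [z]_j (0 outside 1..n) *)
Definition coord n (z : 'cV[R]_n) (j : nat) : R :=
  oapp (fun k : 'I_n => z k 0) 0 (insub j.-1).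

Definition unitv n (k : 'I_n) : 'cV[R]_n := delta_mx k 0.
Definition grad n (f : 'cV[R]_n -> R) (x : 'cV[R]_n) : 'cV[R]_n :=
  \col_k derive1 (fun s : R => f (x + s *: unitv k)) 0.

Definition is_prox n (g : 'cV[R]_n -> R) (eta : R) (x p : 'cV[R]_n) : Prop :=
  forall x', g p + sqnorm (p - x) / (2 * eta) <= g x' + sqnorm (x' - x) / (2 * eta).

Definition algorithm_class1 n rA (f0 g : 'cV[R]_n -> R) (A : 'M[R]_(rA, n))
    (b : 'cV[R]_rA) (x : nat -> 'cV[R]_n) : Prop :=
  forall t : nat, (1 <= t)%N ->
    exists eta : R, 0 < eta /\
    exists xi : 'cV[R]_n,
      (exists c1 c2 c3 c4 : nat -> R,
         xi = \sum_(s < t) (c1 s *: x s + c2 s *: grad f0 (x s)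
                            + c3 s *: (A^T *m b) + c4 s *: (A^T *m (A *m x s)))) /\
    exists p : 'cV[R]_n, is_prox g eta xi p /\
    exists a1 a2 : R, x t = a1 *: xi + a2 *: p.

(* J_p restricted to a set of rows: row k (0-based, i.e. row k+1 of J_p)
   has -1 at column k and +1 at column k+1.  Rows listed in increasing order. *)
Definition Jrows p (S : {set 'I_p}) : 'M[R]_(#|S|, p) :=
  \matrix_(r, c) (if c == enum_val r then -1
                  else if val c == (val (enum_val r)).+1 then 1 else 0).

(* M^C = {1..m-1} \ {i m1}; as 0-based row indices k (row k+1) *)
Definition MC m m1 : {set 'I_m} := [set k : 'I_m | ((val k).+1 < m)%N && ~~ (m1 %| (val k).+1)%N].

Definition Amat m m1 dbar (Lf : R) : 'M[R]_(#|MC m m1| * dbar, m * dbar) :=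
  (m%:R * Lf) *: kron (Jrows (MC m m1)) (1%:M : 'M[R]_dbar).

(* g(x) = beta * sum_{i in M} ||x_i - x_{i+1}||_1, M = {i m1 : 1 <= i <= 3 m2 - 1},
   written with 0-based block indices i, i' (1-based blocks i+1, i'+1 = i+2) *)
Definition gfun m m1 dbar (beta : R) (x : 'cV[R]_(m * dbar)) : R :=
  beta * \sum_(i : 'I_m) \sum_(i' : 'I_m | (val i' == (val i).+1) && (m1 %| (val i).+1)%N)
          \sum_(j < dbar) `|blk x i j 0 - blk x i' j 0|.

Definition Psi (u : R) : R := if u <= 0 then 0 else 1 - expR (- u ^+ 2).
Definition Phi (v : R) : R := 4 * atan v + 2 * pi.

(* varphi(z, j), j 1-based *)
Definition varphi n (z : 'cV[R]_n) (j : nat) : R :=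
  if j == 1%N then - Psi 1 * Phi (coord z 1)
  else Psi (- coord z j.-1) * Phi (- coord z j) - Psi (coord z j.-1) * Phi (coord z j).

(* h_i, i 1-based *)
Definition hfun m dbar (i : nat) (z : 'cV[R]_dbar) : R :=
  if (i <= m %/ 3)%N then
    varphi z 1 + 3 * \sum_(1 <= j < (dbar %/ 2).+1) varphi z (2 * j)
  else if (i <= 2 * m %/ 3)%N then varphi z 1
  else varphi z 1 + 3 * \sum_(1 <= j < (dbar %/ 2).+1) varphi z (2 * j + 1).

Definition ffun_i m dbar (eps Lf : R) (i : nat) (z : 'cV[R]_dbar) : R :=
  (300 * pi * eps ^+ 2 / (m%:R * Lf)) *
    @hfun m dbar i ((Num.sqrt m%:R * Lf / (150 * pi * eps)) *: z).

Definition f0fun m dbar (eps Lf : R) (x : 'cV[R]_(m * dbar)) : R :=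
  \sum_(i < m) @ffun_i m dbar eps Lf (val i).+1 (blk x i).

End Defs.

(* The oracles of Algorithm Class 1 only propagate nonzero entries along a graph on the
   coordinates (k, c) of x (block k, coordinate c).  The gradient of f0 at (k, c) vanishes
   as long as x(k, c) = 0 and, when h_k couples c - 1 to c, also x(k, c - 1) = 0, because
   Psi is flat at 0; A^T A only mixes coordinate c of adjacent blocks; and since the l1
   terms of g glue the blocks i m1 and i m1 + 1, the prox of g keeps zero a coordinate that
   vanishes in its argument on a whole glued component.  Numbering the components by
   u = k - k / m1 in [0, 3D], D = m2 (m1 - 1), adjacent blocks lie in components at
   distance at most one, and coordinate c >= 2 is coupled to c - 1 only for u <= D (c even)
   or u >= 2D (c odd).  Hence x_t(k, c) = 0 while t < 2 + (c - 2)(D + 1) + the distance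
   from u to that region, which exceeds 1 + m (jbar - 2) / 6 for c >= jbar as
   m1 m2 <= 2D. *)

From Pilot Require Import Defs.
From HB Require Import structures.
From mathcomp Require Import all_boot all_order all_algebra.
From mathcomp Require Import all_classical all_reals all_analysis.
From mathcomp Require Import ring lra zify.
Set Implicit Arguments. Unset Strict Implicit. Unset Printing Implicit Defensive.
Import Order.TTheory GRing.Theory Num.Theory.
Local Open Scope ring_scope.
Local Open Scope classical_set_scope.

Section Combinatorics.
Local Open Scope nat_scope.

Definition component (m1 k : nat) : nat := k - k %/ m1.

Lemma component_succ m1 k : 0 < m1 ->
  component m1 k.+1 = component m1 k + 1 - (m1 %| k.+1).
Proof.
move=> m1_gt0; rewrite /component divnS //.
by have := leq_div k m1; case: (m1 %| k.+1); lia.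
Qed.

Lemma component_succ_dvd m1 k : 0 < m1 -> m1 %| k.+1 ->
  component m1 k.+1 = component m1 k.
Proof. by move=> m1_gt0 dvd; rewrite component_succ // dvd; lia. Qed.

Lemma component_step m1 k : 0 < m1 ->
  component m1 k <= component m1 k.+1 <= (component m1 k).+1.
Proof. by move=> m1_gt0; rewrite component_succ //; case: (m1 %| k.+1); lia. Qed.

Lemma leq_component m1 k k' : 0 < m1 -> k <= k' ->
  component m1 k <= component m1 k'.
Proof.
move=> m1_gt0; elim: k' => [|k' IH]; first by rewrite leqn0 => /eqP->.
rewrite leq_eqVlt => /orP[/eqP->//|]; rewrite ltnS => /IH.
by have := component_step k' m1_gt0; lia.
Qed.

Lemma component_lipschitz m1 a b : 0 < m1 -> a <= b.+1 -> b <= a.+1 ->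
  component m1 a <= (component m1 b).+1.
Proof.
move=> m1_gt0 ab ba; have [/(leq_component m1_gt0)|ltba] := leqP a b; first lia.
have -> : a = b.+1 by lia.
by have := component_step b m1_gt0; lia.
Qed.

Lemma component_mul m1 n : 0 < m1 -> component m1 (m1 * n) = n * (m1 - 1).
Proof. by move=> m1_gt0; rewrite /component mulKn // mulnBr muln1 mulnC. Qed.

Lemma component_mul_pred m1 n : 0 < m1 -> 0 < n ->
  component m1 (m1 * n).-1 = n * (m1 - 1).
Proof.
move=> m1_gt0 n_gt0; rewrite -component_mul // -[in RHS](@prednK (m1 * n)).
  by rewrite component_succ_dvd ?prednK ?dvdn_mulr ?muln_gt0 ?m1_gt0.
by rewrite muln_gt0 m1_gt0.
Qed.

(* Truncated subtraction makes [u - D] and [2 * D - u] the distances from u to the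
   regions u <= D and u >= 2 * D. *)
Definition activation_time (D c u : nat) : nat :=
  if c <= 1 then 1 else 2 + (c - 2) * (D + 1) + (if odd c then 2 * D - u else u - D).

Lemma activation_time_even D c u : 2 <= c -> ~~ odd c -> u <= D ->
  activation_time D c u <= (activation_time D c.-1 u).+1.
Proof.
case: c => [|[|[|c]]] //= _; first by rewrite /activation_time /=; lia.
rewrite /activation_time /= !subSS !subn0 !negbK => oddc le_uD.
by rewrite oddc /= mulSn; move: (c * (D + 1)) => q; lia.
Qed.

Lemma activation_time_odd D c u : 2 <= c -> odd c -> 2 * D <= u ->
  activation_time D c u <= (activation_time D c.-1 u).+1.
Proof.
case: c => [|[|[|c]]] //= _.
rewrite /activation_time /= !subSS !subn0 !negbK => oddc le_2Du.
by rewrite (negbTE oddc) /= mulSn; move: (c * (D + 1)) => q; lia.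
Qed.

Lemma activation_time_lipschitz D c u u' : u <= u'.+1 -> u' <= u.+1 ->
  activation_time D c u <= (activation_time D c u').+1.
Proof.
rewrite /activation_time; case: (c <= 1) => //.
by case: (odd c); move: ((c - 2) * (D + 1)) => q; lia.
Qed.

Lemma activation_time_ge D c u : 2 <= c ->
  2 + (c - 2) * (D + 1) <= activation_time D c u.
Proof.
rewrite /activation_time; case: ifP => [|_ _]; first lia.
by move: ((c - 2) * (D + 1)) => q; lia.
Qed.

Lemma lt_activation_horizon m1 m2 jbar c t : 2 <= m1 -> jbar <= c ->
  6 * t <= 6 + 3 * m1 * m2 * (jbar - 2) ->
  t < 2 + (c - 2) * (m2 * (m1 - 1) + 1).
Proof.
move=> m1_ge2 jbar_le t_le; set D := m2 * (m1 - 1).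
have m1m2_le : m1 * m2 <= 2 * D.
  by rewrite mulnC /D mulnCA leq_mul2l; apply/orP; right; lia.
have := leq_mul m1m2_le (leqnn (jbar - 2)).
have := leq_mul (leqnn (D + 1)) (leq_sub2r 2 jbar_le).
by rewrite -!mulnA in t_le *; nia.
Qed.

End Combinatorics.

Lemma unpairK p r (i : 'I_p) (j : 'I_r) : unpair (mxvec_index i j) = (i, j).
Proof. by rewrite /unpair /mxvec_index cast_ordK enum_rankK. Qed.

Lemma mxvec_index_eq p r (i i' : 'I_p) (j j' : 'I_r) :
  (mxvec_index i j == mxvec_index i' j') = (i == i') && (j == j').
Proof.
apply/eqP/andP => [eq_ij|[/eqP-> /eqP->]//].
by have := congr1 (@unpair p r) eq_ij; rewrite !unpairK => -[-> ->].
Qed.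

Section Objective.
Variable R : realType.

Lemma coord_add_delta n (w : 'cV[R]_n) (c0 : 'I_n) (r : R) j :
  Defs.coord (w + r *: delta_mx c0 0) j =
  Defs.coord w j + (if j.-1 == c0 then r else 0).
Proof.
rewrite /Defs.coord; case: (ltnP j.-1 n) => jn.
  rewrite !insubT /= !mxE eqxx andbT.
  have -> : (Ordinal jn == c0) = (j.-1 == c0) by [].
  by case: (_ == _); rewrite ?mulr1 ?mulr0.
rewrite !insubF ?ltnNge ?jn //= add0r; case: eqP => // e.
by move: jn; rewrite e leqNgt ltn_ord.
Qed.

Lemma coordZ n (w : 'cV[R]_n) (a : R) j :
  Defs.coord (a *: w) j = a * Defs.coord w j.
Proof.
by rewrite /Defs.coord; case: insubP => [k _ _|] /=; rewrite ?mxE ?mulr0.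
Qed.

Lemma coord_succ n (w : 'cV[R]_n) (c0 : 'I_n) :
  Defs.coord w c0.+1 = w c0 0.
Proof.
rewrite /Defs.coord; case: insubP => [k _ kv|] /=.
  by congr (w _ 0); apply: val_inj.
by rewrite ltn_ord.
Qed.

Lemma Psi0 : Psi (0 : R) = 0.
Proof. by rewrite /Psi lexx. Qed.

Lemma Psi_ge0 (u : R) : 0 <= Psi u.
Proof.
rewrite /Psi; case: ifP => // _.
by rewrite subr_ge0 expR_le1 oppr_le0 sqr_ge0.
Qed.

Lemma Psi_le_sqr (u : R) : Psi u <= u ^+ 2.
Proof.
rewrite /Psi; case: ifP => _; first exact: sqr_ge0.
by have := expR_ge1Dx (- u ^+ 2); lra.
Qed.

Lemma norm_Phi_le (v : R) : `|Phi v| <= 4 * pi.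
Proof.
rewrite /Phi; have := atan_ltpi2 v; have := atan_gtNpi2 v; have := pi_gt0 R.
by move=> *; rewrite ger0_norm; lra.
Qed.

(* The perturbed coordinate enters varphi(., j) either through Psi, which is flat at 0,
   or, for j = c0 + 1, through Phi multiplied by Psi(+-[w]_c0), which vanishes when
   [w]_c0 = 0. *)
Lemma varphi_add_delta_le n (w : 'cV[R]_n) (c0 : 'I_n) (r : R) (j : nat) :
  (1 <= c0)%N -> w c0 0 = 0 ->
  (j != c0.+1 \/ Defs.coord w c0 = 0) ->
  `|varphi (w + r *: delta_mx c0 0) j - varphi w j| <= 8 * pi * r ^+ 2.
Proof.
move=> c0_ge1 wc0 hj.
have K_ge0 : 0 <= 8 * pi * r ^+ 2 by rewrite mulr_ge0 ?sqr_ge0 // mulr_ge0 // pi_ge0.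
rewrite /varphi; case: ifP => [_ | j_neq1].
  rewrite coord_add_delta /= (_ : (0%N == c0) = false) ?addr0 ?subrr ?normr0 //.
  by apply/negbTE; rewrite eq_sym -lt0n.
rewrite !coord_add_delta.
have [/eqP jc0|j_neq] := boolP (j.-1 == c0).
  have -> : (j.-1.-1 == c0) = false by apply/negbTE; lia.
  have -> : Defs.coord w j.-1 = 0.
    by rewrite jc0; case: hj => // /eqP; lia.
  by rewrite !addr0 oppr0 Psi0 !mul0r !subr0 normr0.
have [/eqP jc0'|_] := boolP (j.-1.-1 == c0); last first.
  by rewrite !addr0 subrr normr0.
have -> : j.-1 = c0.+1 by move/eqP: j_neq; lia.
rewrite !addr0 coord_succ wc0 add0r oppr0 Psi0 !mul0r subrr subr0.
set b := Defs.coord w j.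
apply: (le_trans (ler_normB _ _)); rewrite !normrM !(ger0_norm (Psi_ge0 _)).
have := Psi_le_sqr (- r); have := Psi_le_sqr r.
have := norm_Phi_le (- b); have := norm_Phi_le b.
have := Psi_ge0 (- r); have := Psi_ge0 r.
have := normr_ge0 (Phi b); have := normr_ge0 (Phi (- b)).
by rewrite sqrrN; nra.
Qed.

(* h_i contains the term varphi(., c) coupling coordinate c to c - 1 (i, c 1-based). *)
Definition coupled (m i c : nat) : bool :=
  if (i <= m %/ 3)%N then ~~ odd c else if (i <= 2 * m %/ 3)%N then false else odd c.

Lemma hfun_add_delta_le m dbar i (w : 'cV[R]_dbar) (c0 : 'I_dbar) (r : R) :
  (1 <= c0)%N -> w c0 0 = 0 ->
  (coupled m i c0.+1 -> Defs.coord w c0 = 0) ->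
  `|hfun m i (w + r *: delta_mx c0 0) - hfun m i w|
     <= (1 + 3 * dbar%:R) * (8 * pi * r ^+ 2).
Proof.
move=> c0_ge1 wc0 coupled_eq0; set w' := w + _; set K := 8 * pi * r ^+ 2.
have K_ge0 : 0 <= K by rewrite mulr_ge0 ?sqr_ge0 // mulr_ge0 // pi_ge0.
have varphi_le j : (j != c0.+1 \/ Defs.coord w c0 = 0) ->
    `|varphi w' j - varphi w j| <= K by exact: varphi_add_delta_le.
have varphi1_le : `|varphi w' 1 - varphi w 1| <= K.
  by apply: varphi_le; left; rewrite eqSS eq_sym -lt0n.
have sum_le (F : nat -> nat) :
    (forall j, F j != c0.+1 \/ Defs.coord w c0 = 0) ->
    `|\sum_(1 <= j < (dbar %/ 2).+1) varphi w' (F j)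
      - \sum_(1 <= j < (dbar %/ 2).+1) varphi w (F j)| <= dbar%:R * K.
  move=> F_ok; rewrite -sumrB; apply: le_trans (ler_norm_sum _ _ _) _.
  apply: le_trans (ler_sum _ (fun j _ => varphi_le _ (F_ok j))) _.
  rewrite sumr_const_nat subn1 /= -(mulr_natl K) ler_wpM2r //.
  by rewrite ler_nat leq_div.
have add3M_le (s' s : R) : `|s' - s| <= dbar%:R * K ->
    `|(varphi w' 1 + 3 * s') - (varphi w 1 + 3 * s)| <= (1 + 3 * dbar%:R) * K.
  move=> s_le; rewrite (_ : _ - _ = (varphi w' 1 - varphi w 1) + 3 * (s' - s)).
    by apply: le_trans (ler_normD _ _) _; rewrite normrM ger0_norm //; lra.
  by ring.
rewrite /hfun /coupled in coupled_eq0 *; case: ifP => [i_le|i_gt1] /=.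
  apply/add3M_le/sum_le => j.
  have [odd_c0|] := boolP (odd c0.+1); last by right; apply: coupled_eq0; rewrite i_le.
  by left; apply: (contraTneq _ odd_c0) => <-; rewrite oddM.
case: ifP => [i_le|i_gt] /=.
  apply: le_trans varphi1_le _; rewrite -[X in X <= _]mul1r ler_wpM2r // lerDl.
  by rewrite mulr_ge0.
apply/add3M_le/sum_le => j.
have [odd_c0|even_c0] := boolP (odd c0.+1).
  by right; apply: coupled_eq0; rewrite i_gt1 i_gt.
by left; apply: (contraNneq _ even_c0) => <-; rewrite addn1 /= oddM.
Qed.

Lemma derive1_eq0_quadratic (f : R -> R) (K : R) :
  (forall r, `|f r - f 0| <= K * r ^+ 2) -> derive1 f 0 = 0.
Proof.
move=> f_le.
have K_ge0 : 0 <= K by have := f_le 1; rewrite expr1n mulr1; apply: le_trans.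
rewrite /derive1; apply: cvg_lim => //; apply/cvgr0Pnorm_lt => e e_gt0.
have e'_gt0 : 0 < e / (K + 1) by rewrite divr_gt0 //; lra.
near=> h; have [->|h_neq0] := eqVneq h 0; first by rewrite invr0 scale0r normr0.
have : `|h| < e / (K + 1) by near: h; exact: dnbhs0_lt.
have h_gt0 : 0 < `|h| by rewrite normr_gt0.
rewrite ltr_pdivlMr; last lra.
move=> h_lt; rewrite addr0 normrZ normfV mulrC ltr_pdivrMr //.
by have := f_le h; rewrite -real_normK ?num_real //; nra.
Unshelve. all: by end_near.
Qed.

Lemma blk_add_unitv m dbar (x : 'cV[R]_(m * dbar)) (k : 'I_m) (c0 : 'I_dbar)
    (r : R) (i : 'I_m) :
  blk (x + r *: unitv R (mxvec_index k c0)) i =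
  blk x i + (if i == k then r *: delta_mx c0 0 else 0).
Proof.
apply/colP => j; rewrite !mxE mxvec_index_eq.
by case: (i == k); rewrite !mxE ?andbF ?mulr0.
Qed.

Lemma grad_f0fun_eq0 m dbar (eps Lf : R) (x : 'cV[R]_(m * dbar))
    (k : 'I_m) (c0 : 'I_dbar) :
  (1 <= c0)%N -> x (mxvec_index k c0) 0 = 0 ->
  (coupled m k.+1 c0.+1 -> Defs.coord (blk x k) c0 = 0) ->
  grad (f0fun eps Lf) x (mxvec_index k c0) 0 = 0.
Proof.
move=> c0_ge1 x_eq0 coupled_eq0; rewrite /grad mxE.
set C := 300 * pi * eps ^+ 2 / (m%:R * Lf).
set a := Num.sqrt m%:R * Lf / (150 * pi * eps).
apply: (@derive1_eq0_quadratic _ (`|C| * ((1 + 3 * dbar%:R) * (8 * pi * a ^+ 2)))).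
move=> r; rewrite scale0r addr0 /f0fun -sumrB (bigD1 k) //= big1 => [|i ik]; last first.
  by rewrite blk_add_unitv (negPf ik) addr0 subrr.
rewrite addr0 blk_add_unitv eqxx /ffun_i -/C -/a -mulrBr normrM scalerDr scalerA.
have := @hfun_add_delta_le m dbar k.+1 (a *: blk x k) c0 (a * r) c0_ge1.
rewrite !mxE x_eq0 mulr0 coordZ => /(_ erefl) hfun_le.
apply: le_trans (ler_wpM2l (normr_ge0 C) (hfun_le _)) _.
  by move=> /coupled_eq0 ->; rewrite mulr0.
by rewrite exprMn le_eqVlt; apply/orP; left; apply/eqP; ring.
Qed.

End Objective.

Section Constraint.
Variable R : realType.

Definition banded {p q} (J : 'M[R]_(p, q)) : Prop :=
  forall r c c', J r c != 0 -> J r c' != 0 -> (c' <= c.+1)%N.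

Lemma Jrows_banded p (S : {set 'I_p}) : banded (Jrows R S).
Proof.
have Jrows_neq0 r c : Jrows R S r c != 0 ->
    c = enum_val r :> nat \/ c = (enum_val r).+1 :> nat.
  rewrite mxE; case: ifP => [/eqP->|_]; first by left.
  by case: ifP => [/eqP->|_]; [right | rewrite eqxx].
by move=> r c c' /Jrows_neq0 [] ? /Jrows_neq0 [] ?; lia.
Qed.

Lemma kron_banded_normal_eq0 p m dbar (J : 'M[R]_(p, m)) (a : R)
    (x : 'cV[R]_(m * dbar)) (k : 'I_m) (c0 : 'I_dbar) :
  banded J ->
  (forall k' : 'I_m, (k' <= k.+1)%N -> (k <= k'.+1)%N -> x (mxvec_index k' c0) 0 = 0) ->
  let A := a *: kron J 1%:M in (A^T *m (A *m x)) (mxvec_index k c0) 0 = 0.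
Proof.
move=> J_banded x_eq0 A; rewrite mxE; apply: big1 => rr _.
rewrite !mxE unpairK /=.
have [->|J_k] := eqVneq (J (unpair rr).1 k) 0; first by rewrite !(mul0r, mulr0).
have [c0E|] := eqVneq (unpair rr).2 c0; last by rewrite !(mul0r, mulr0).
rewrite big1 ?mulr0 // => l _; case/mxvec_indexP: l => k' j'.
rewrite !mxE unpairK /=.
have [->|J_k'] := eqVneq (J (unpair rr).1 k') 0; first by rewrite !(mul0r, mulr0).
have [j'E|] := eqVneq (unpair rr).2 j'; last by rewrite !(mul0r, mulr0).
by rewrite -j'E c0E x_eq0 ?mulr0 // (J_banded _ _ _ J_k J_k', J_banded _ _ _ J_k' J_k).
Qed.

Lemma Amat_normal_eq0 m m1 dbar (Lf : R) (x : 'cV[R]_(m * dbar))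
    (k : 'I_m) (c0 : 'I_dbar) :
  (forall k' : 'I_m, (k' <= k.+1)%N -> (k <= k'.+1)%N -> x (mxvec_index k' c0) 0 = 0) ->
  let A := Amat m m1 dbar Lf in (A^T *m (A *m x)) (mxvec_index k c0) 0 = 0.
Proof. exact/kron_banded_normal_eq0/Jrows_banded. Qed.

Lemma opnorm_ge0 p q (A : 'M[R]_(p, q)) : 0 <= opnorm A.
Proof.
have sqnorm0 n : sqnorm (0 : 'cV[R]_n) = 0.
  by rewrite /sqnorm big1 // => k _; rewrite mxE expr2 mul0r.
rewrite /opnorm; set E := [set _ | _ in _].
have E0 : E 0.
  by exists 0; rewrite /= /enorm ?mulmx0 sqnorm0 sqrtr0 ?ler01.
have [E_sup|] := pselect (has_sup E); last by move=> ?; rewrite sup_out.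
exact: (ub_le_sup E_sup.2 E0).
Qed.

End Constraint.

Section ZeroRespecting.
Variable R : realType.

Definition zero_on {n} (Z : pred 'I_n) (p : 'cV[R]_n) : 'cV[R]_n :=
  \col_l (if l \in Z then 0 else p l 0).

Lemma is_prox_eq0 n (g : 'cV[R]_n -> R) eta xi p (Z : pred 'I_n) :
  0 < eta -> is_prox g eta xi p -> g (zero_on Z p) <= g p ->
  {in Z, forall l, xi l 0 = 0} -> {in Z, forall l, p l 0 = 0}.
Proof.
move=> eta_gt0 p_prox g_le xi_eq0 l lZ.
have sqnorm_le : sqnorm (zero_on Z p - xi) + p l 0 ^+ 2 <= sqnorm (p - xi).
  rewrite /sqnorm (bigD1 l) //= [X in _ <= X](bigD1 l) //= !mxE lZ xi_eq0 //.
  rewrite !subr0 expr2 mul0r add0r addrC lerD2r; apply: ler_sum => l' _.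
  by rewrite !mxE; case: ifP => // l'Z; rewrite xi_eq0 // !subr0 expr2 mul0r sqr_ge0.
have ie_gt0 : 0 < (2 * eta)^-1 by rewrite invr_gt0 mulr_gt0.
have := p_prox (zero_on Z p); have := ler_wpM2r (ltW ie_gt0) sqnorm_le.
rewrite mulrDl => le1 le2; have : p l 0 ^+ 2 * (2 * eta)^-1 <= 0 by lra.
rewrite pmulr_lle0 // => sq_le0.
by apply/eqP; rewrite -sqrf_eq0 eq_le sq_le0 sqr_ge0.
Qed.

Definition component_coords {m dbar} m1 (c0 : 'I_dbar) (u : nat) : pred 'I_(m * dbar) :=
  [pred l | ((unpair l).2 == c0) && (component m1 (unpair l).1 == u)].

Lemma gfun_zero_on_le m m1 dbar (beta : R) (c0 : 'I_dbar) (u : nat)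
    (p : 'cV[R]_(m * dbar)) :
  (0 < m1)%N -> 0 <= beta ->
  gfun m1 beta (zero_on (component_coords m1 c0 u) p) <= gfun m1 beta p.
Proof.
move=> m1_gt0 beta_ge0; apply: ler_wpM2l => //; apply: ler_sum => i _.
apply: ler_sum => i' /andP[/eqP i'E dvd_i]; apply: ler_sum => j _.
have same_comp : component m1 i' = component m1 i by rewrite i'E component_succ_dvd.
rewrite !mxE !inE !unpairK /= same_comp.
by case: ifP => _ //; rewrite subr0 normr0 normr_ge0.
Qed.

Lemma class1_eq0 n rA (f0 g : 'cV[R]_n -> R) (A : 'M[R]_(rA, n))
    (x : nat -> 'cV[R]_n) (Z : pred 'I_n) t :
  algorithm_class1 f0 g A 0 x -> (1 <= t)%N ->
  (forall p, g (zero_on Z p) <= g p) ->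
  (forall s, (s < t)%N -> {in Z, forall l,
     [/\ x s l 0 = 0, grad f0 (x s) l 0 = 0 & (A^T *m (A *m x s)) l 0 = 0]}) ->
  {in Z, forall l, x t l 0 = 0}.
Proof.
move=> alg t_ge1 g_le prev_eq0.
have [eta [eta_gt0 [xi [[c1 [c2 [c3 [c4 xiE]]]] [p [p_prox [a1 [a2 xtE]]]]]]]] :=
  alg t t_ge1.
have xi_eq0 : {in Z, forall l, xi l 0 = 0}.
  move=> l lZ; rewrite xiE mulmx0 summxE big1 // => s _.
  move: (prev_eq0 s (ltn_ord s) l lZ).
  move: (grad f0 (x s)) (A^T *m (A *m x s)) => G N; move: (x s) => y [y0 G0 N0].
  by rewrite !mxE y0 G0 N0 !mulr0 !addr0.
move=> l lZ; rewrite xtE !mxE xi_eq0 // (is_prox_eq0 eta_gt0 p_prox (g_le p) xi_eq0 lZ).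
by rewrite !mulr0 addr0.
Qed.

End ZeroRespecting.

Section Invariant.
Variables (R : realType) (eps Lf beta : R) (m1 m2 dbar : nat).
Variable x : nat -> 'cV[R]_(3 * m1 * m2 * dbar).
Hypotheses (m1_gt0 : (0 < m1)%N) (m2_gt0 : (0 < m2)%N) (beta_ge0 : 0 <= beta).
Hypothesis alg : algorithm_class1 (@f0fun R (3 * m1 * m2) dbar eps Lf)
  (@gfun R (3 * m1 * m2) m1 dbar beta) (@Amat R (3 * m1 * m2) m1 dbar Lf) 0 x.
Hypothesis x0 : x 0%N = 0.

Local Notation m := (3 * m1 * m2)%N.
Let D := (m2 * (m1 - 1))%N.

Lemma activation_time_coupled (k : 'I_m) c : coupled m k.+1 c -> (2 <= c)%N ->
  (activation_time D c (component m1 k) <= (activation_time D c.-1 (component m1 k)).+1)%N.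
Proof.
rewrite /coupled.
have -> : (m %/ 3 = m1 * m2)%N by rewrite -!mulnA mulKn.
have -> : (2 * m %/ 3 = m1 * (2 * m2))%N by rewrite mulnCA -!mulnA mulKn //; lia.
case: ifP => [k_le even_c c_ge2 | k_gt]; first apply: activation_time_even => //.
  by rewrite /D -(component_mul_pred m1_gt0 m2_gt0) leq_component //; lia.
case: ifP => // k_gt' odd_c c_ge2; apply: activation_time_odd => //.
by rewrite /D mulnA -(component_mul _ m1_gt0) leq_component //; lia.
Qed.

Lemma x_eq0_before_activation t (k : 'I_m) (c0 : 'I_dbar) :
  (t < activation_time D c0.+1 (component m1 k))%N -> x t (mxvec_index k c0) 0 = 0.
Proof.
elim/ltn_ind: t k c0 => -[|t] IH k c0 t_lt; first by rewrite x0 mxE.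
have c0_ge1 : (1 <= c0)%N by move: t_lt; rewrite /activation_time; case: (nat_of_ord c0).
apply: (class1_eq0 (Z := component_coords m1 c0 (component m1 k)) alg) => //;
  [ by move=> p; apply: gfun_zero_on_le | | by rewrite inE unpairK /= !eqxx ].
move=> s s_lt l; case/mxvec_indexP: l => k' c; rewrite inE unpairK /=.
case/andP=> /eqP-> /eqP same_comp.
have x_eq0 (k'' : 'I_m) (c'' : 'I_dbar) :
    (s < activation_time D c''.+1 (component m1 k''))%N ->
  x s (mxvec_index k'' c'') 0 = 0 := IH s s_lt k'' c''.
split.
- by apply: x_eq0; rewrite same_comp; lia.
- apply: grad_f0fun_eq0 => // [|coupled_k']; first by apply: x_eq0; rewrite same_comp; lia.
  have c0'_lt : (c0.-1 < dbar)%N := leq_ltn_trans (leq_pred _) (ltn_ord c0).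
  have c0E : val c0 = (val (Ordinal c0'_lt)).+1 by rewrite /= prednK.
  rewrite c0E coord_succ mxE; apply: x_eq0; rewrite /= prednK //.
  have := activation_time_coupled coupled_k'.
  by rewrite ltnS c0_ge1 same_comp => /(_ isT) /=; lia.
- apply: Amat_normal_eq0 => k'' le_k'' le_k'; apply: x_eq0.
  have := activation_time_lipschitz D c0.+1 (component_lipschitz m1_gt0 le_k' le_k'')
    (component_lipschitz m1_gt0 le_k'' le_k').
  by rewrite same_comp; lia.
Qed.

End Invariant.

Theorem proposition3 (R : realType) (eps Lf beta : R) (m1 m2 dbar : nat)
  (x : nat -> 'cV[R]_(3 * m1 * m2 * dbar)) :
  0 < eps < 1 -> 0 < Lf ->
  (2 <= m1)%N -> (1 <= m2)%N -> ~~ odd (m1 * m2) ->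
  odd dbar -> (5 <= dbar)%N ->
  (50 * pi + 1 + opnorm (@Amat R (3 * m1 * m2) m1 dbar Lf)) * Num.sqrt ((3 * m1 * m2)%N%:R) * eps
    < beta ->
  algorithm_class1 (@f0fun R (3 * m1 * m2) dbar eps Lf)
    (@gfun R (3 * m1 * m2) m1 dbar beta)
    (@Amat R (3 * m1 * m2) m1 dbar Lf) 0 x ->
  x 0%N = 0 ->
  forall jbar : nat, (2 <= jbar <= dbar)%N ->
  forall t : nat, (6 * t <= 6 + 3 * m1 * m2 * (jbar - 2))%N ->
  forall i : 'I_(3 * m1 * m2),
    supp (blk (x t) i) `<=` [set k : nat | (1 <= k <= jbar.-1)%N].
Proof.
move=> /andP[eps_gt0 _] _ m1_ge2 m2_ge1 _ _ _ beta_gt alg x0.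
move=> jbar /andP[jbar_ge2 _] t t_le i _ [c0 [-> x_neq0]] /=.
have beta_ge0 : 0 <= beta.
  apply: le_trans (ltW beta_gt); rewrite mulr_ge0 ?(ltW eps_gt0) // mulr_ge0 //.
  by have := opnorm_ge0 (Amat (3 * m1 * m2) m1 dbar Lf); have := pi_ge0 R; lra.
apply: contraNT x_neq0; rewrite -leqNgt mxE => c0_ge.
rewrite (x_eq0_before_activation (ltnW m1_ge2) m2_ge1 beta_ge0 alg x0) //.
apply: leq_trans (activation_time_ge _ _ _); last lia.
by apply: lt_activation_horizon t_le; lia.
Qed.
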